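(* Suppose $\mathbb{F}$ has characteristic $2$ and $S$ is a symplectic form on $V$. Then there is no Weyl multiplier $m$ for $(V,S)$ taking values in $\{+1,-1\}$.
   Context: $\mathbb{F}$ is a finite field with $|\mathbb{F}|=2^n$, $\mathrm{Tr}:\mathbb{F}\to\mathbb{Z}_2$ is the field trace, and $V$ is a $2$-dimensional $\mathbb{F}$-vector space. A symplectic form is a nonzero $\mathbb{F}$-bilinear $S:V\times V\to\mathbb{F}$ with $S(\mathbf{v},\mathbf{v})=0$ for all $\mathbf{v}$. A Weyl multiplier for $(V,S)$ is a function $m:V\times V\to\{z\in\mathbb{C}:|z|=1\}$ with the following properties: - the cocycle identity $m(\mathbf{u}+\mathbf{v},\mathbf{w})m(\mathbf{u},\mathbf{v})=m(\mathbf{u},\mathbf{v}+\mathbf{w})m(\mathbf{v},\mathbf{w})$ holds; - $m(\mathbf{d}_1,\mathbf{d}_2)=1$ whenever $\mathbf{d}_1,\mathbf{d}_2$ lie in a common $1$-dimensional subspace; - $\overline{m(\mathbf{u},\mathbf{v})}m(\mathbf{v},\mathbf{u})=(-1)^{\mathrm{Tr}\,S(\mathbf{u},\mathbf{v})}$ for all $\mathbf{u},\mathbf{v}\in V$. *)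

From HB Require Import structures.
From mathcomp Require Import all_boot all_order all_algebra all_field.
Set Implicit Arguments. Unset Strict Implicit. Unset Printing Implicit Defensive.
Import Order.TTheory GRing.Theory Num.Theory.
Local Open Scope ring_scope.

(* Absolute trace F -> F_2 of a field F with |F| = 2^n, computed inside F:
   Tr x = x + x^2 + x^4 + ... + x^(2^(n-1)); its value lies in {0,1} of F. *)
Definition fieldTr (F : finFieldType) (n : nat) (x : F) : F :=
  \sum_(i < n) x ^+ (2 ^ i)%N.

Definition signTr (F : finFieldType) (n : nat) (x : F) : algC :=
  if fieldTr n x == 0 then 1 else -1.

Definition bilinear_form (F : fieldType) (V : vectType F) (S : V -> V -> F) : Prop :=
  (forall (a : F) (u v w : V), S (a *: u + v) w = a * S u w + S v w) /\
  (forall (a : F) (u v w : V), S u (a *: v + w) = a * S u v + S u w).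

Definition symplectic_form (F : fieldType) (V : vectType F) (S : V -> V -> F) : Prop :=
  [/\ bilinear_form S, (forall v : V, S v v = 0) & (exists u v : V, S u v != 0)].

Definition common_line (F : fieldType) (V : vectType F) (d1 d2 : V) : Prop :=
  exists U : {vspace V}, [/\ \dim U = 1%N, d1 \in U & d2 \in U].

Definition weyl_multiplier (F : finFieldType) (n : nat) (V : vectType F)
    (S : V -> V -> F) (m : V -> V -> algC) : Prop :=
  [/\ (forall u v : V, `|m u v| = 1),
      (forall u v w : V, m (u + v) w * m u v = m u (v + w) * m v w),
      (forall d1 d2 : V, common_line d1 d2 -> m d1 d2 = 1)
    & (forall u v : V, (m u v)^* * m v u = signTr n (S u v))].

From HB Require Import structures.
From mathcomp Require Import all_boot all_order all_algebra all_field.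
Set Implicit Arguments. Unset Strict Implicit. Unset Printing Implicit Defensive.
Import Order.TTheory GRing.Theory Num.Theory.
Local Open Scope ring_scope.

(* In characteristic 2 the vectors are 2-torsion, and a cocycle that is trivial
   on lines and takes values of square 1 is forced to be symmetric.  Its
   commutator m(u,v)^* m(v,u) is then 1, so the trace of S(u,v) would vanish
   for all u, v.  But S is onto F, while the trace polynomial
   X + X^2 + ... + X^(2^(n-1)) has fewer than |F| = 2^n roots. *)

Section TraceNonzero.

Variables (F : finFieldType) (n : nat).

Lemma size_trace_poly (k : nat) :
  size (\sum_(i < k.+1) ('X^(2 ^ i)%N : {poly F})) = (2 ^ k).+1.
Proof.
elim: k => [|k IHk]; first by rewrite big_ord1 size_polyXn.
rewrite big_ord_recr /= addrC size_polyDl size_polyXn // IHk ltnS.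
by rewrite ltn_exp2l.
Qed.

Lemma fieldTr_neq0 : #|F| = (2 ^ n)%N -> exists x : F, fieldTr n x != 0.
Proof.
case: n => [|k] cardF.
  by have := card_finNzRing_gt1 F; rewrite cardF.
apply/existsP; rewrite -negb_forall; apply/negP => /forallP trF0.
pose p : {poly F} := \sum_(i < k.+1) 'X^(2 ^ i)%N.
have p_neq0 : p != 0 by rewrite -size_poly_eq0 size_trace_poly.
have rootsF : all (root p) (enum F).
  apply/allP => x _; rewrite /root horner_sum.
  by under eq_bigr do rewrite hornerXn; exact: trF0.
have := max_poly_roots p_neq0 rootsF (enum_uniq F).
by rewrite size_trace_poly -cardE cardF ltnS leq_exp2l // ltnn.
Qed.

End TraceNonzero.

Lemma signTr_eq1 (F : finFieldType) (n : nat) (x : F) :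
  signTr n x = 1 -> fieldTr n x = 0.
Proof.
rewrite /signTr; case: eqP => // _ /eqP.
by rewrite eq_sym -addr_eq0 -(natrD _ 1 1) pnatr_eq0.
Qed.

Lemma pchar2_addvv (R : nzRingType) (V : lmodType R) :
  2%N \in [pchar R] -> forall v : V, v + v = 0.
Proof. by move=> charR v; rewrite -mulr2n -scaler_nat (pcharf0 charR) scale0r. Qed.

Section BilinearForm.

Variables (F : fieldType) (V : vectType F) (S : V -> V -> F).
Hypothesis bilS : bilinear_form S.

Lemma bilinear_form0l (w : V) : S 0 w = 0.
Proof.
have := bilS.1 1 0 0 w; rewrite scale1r addr0 mul1r => /eqP.
by rewrite eq_sym -subr_eq0 addrK => /eqP.
Qed.

Lemma bilinear_formZl (a : F) (u w : V) : S (a *: u) w = a * S u w.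
Proof. by rewrite -[a *: u]addr0 bilS.1 bilinear_form0l addr0. Qed.

End BilinearForm.

Section Lines.

Variables (F : fieldType) (V : vectType F).
Hypothesis dimV_gt0 : (0 < \dim (fullv : {vspace V}))%N.

Lemma line_through (d : V) : exists2 U : {vspace V}, \dim U = 1%N & d \in U.
Proof.
have [->|d_neq0] := eqVneq d 0.
  exists <[vpick fullv]>%VS; last exact: mem0v.
  by rewrite dim_vline vpick0 -dimv_eq0 -lt0n dimV_gt0.
by exists <[d]>%VS; rewrite ?dim_vline ?d_neq0 ?memv_line.
Qed.

Lemma common_line_refl (d : V) : common_line d d.
Proof. by have [U U1 dU] := line_through d; exists U. Qed.

Lemma common_line0r (d : V) : common_line d 0.
Proof. by have [U U1 dU] := line_through d; exists U; rewrite mem0v. Qed.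

End Lines.

Section SignCocycle.

Variables (V : zmodType) (R : nzRingType) (m : V -> V -> R).
Hypotheses (two_torsion : forall v : V, v + v = 0)
  (cocycle : forall u v w, m (u + v) w * m u v = m u (v + w) * m v w)
  (m_diag : forall v, m v v = 1) (m_r0 : forall v, m v 0 = 1)
  (m_sq : forall u v, m u v * m u v = 1).

Lemma cocycle_addl (u v : V) : m (u + v) v = m u v.
Proof.
have := cocycle u v v; rewrite two_torsion m_r0 m_diag mulr1 => cuv.
by rewrite -[LHS]mulr1 -(m_sq u v) mulrA cuv mul1r.
Qed.

(* The cocycle identity at (u + v, u, v), using (u + v) + u = v. *)
Lemma cocycle_sym (u v : V) : m u v = m v u.
Proof.
have := cocycle (u + v) u v.
rewrite [u + v]addrC -addrA two_torsion addr0 !m_diag !mul1r cocycle_addl.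
by move=> ->.
Qed.

End SignCocycle.

Theorem mainTheorem6 (F : finFieldType) (n : nat) (V : vectType F)
    (S : V -> V -> F) :
  #|F| = (2 ^ n)%N ->
  2%N \in [pchar F] ->
  \dim (fullv : {vspace V}) = 2%N ->
  symplectic_form S ->
  ~ exists m : V -> V -> algC,
      weyl_multiplier n S m /\ (forall u v : V, m u v = 1 \/ m u v = -1).
Proof.
move=> cardF charF dimV [bilS _ [u0 [v0 Su0v0]]] [m [[_ cocycle line sgn] m_sign]].
have dimV_gt0 : (0 < \dim (fullv : {vspace V}))%N by rewrite dimV.
have m_sq u v : m u v * m u v = 1.
  by case: (m_sign u v) => ->; rewrite ?mulrNN mulr1.
have m_conj u v : (m u v)^* = m u v.
  by case: (m_sign u v) => ->; rewrite ?rmorph1 ?rmorphN1.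
have m_sym := cocycle_sym (pchar2_addvv (V := V) charF) cocycle
  (fun v => line _ _ (common_line_refl dimV_gt0 v))
  (fun v => line _ _ (common_line0r dimV_gt0 v)) m_sq.
have [x /eqP] := fieldTr_neq0 cardF; apply; apply: signTr_eq1.
rewrite -[x](divfK Su0v0) -bilinear_formZl // -sgn m_conj.
by rewrite [m v0 _]m_sym m_sq.
Qed.
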